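(* Let $R_k(n)$ denote the number of distinct languages denoted by regular expressions of ordinary length exactly $n$ over a $k$-letter alphabet. Then $R_1(n) = \Omega(1.3247^n)$ and $R_2(n) = \Omega(2.102374^n)$ as $n \to \infty$.
   Context: A regular expression over a finite alphabet $\Sigma$ is a (syntactically valid) string over $\Sigma \cup \{+, *, (, ), \epsilon, \emptyset\}$ built in the usual way from the constants $\emptyset$, $\epsilon$ and $a \in \Sigma$ using union $+$, concatenation (written by juxtaposition) and Kleene star $*$, with parentheses, under the usual precedence rules (star binds tighter than concatenation, which binds tighter than union); it denotes a regular language in the standard way. The ordinary length of a regular expression is the total number of symbols in it, including parentheses, $\epsilon$, $\emptyset$ and operator symbols, counted with multiplicity (e.g. $(0+10)*(1+\epsilon)$ has ordinary length 12). *)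

From HB Require Import structures.
From mathcomp Require Import all_boot all_order all_algebra.
From mathcomp Require Import finmap.
From mathcomp Require Import boolp classical_sets cardinality.
Set Implicit Arguments. Unset Strict Implicit. Unset Printing Implicit Defensive.

(* Syntactically valid regular expressions over the alphabet 'I_k, as parse
   trees of the standard unambiguous precedence grammar
     E ::= E + T | T          (union, lowest precedence)
     T ::= T F | F            (concatenation)
     F ::= F * | A            (Kleene star, highest precedence)
     A ::= a | eps | empty | ( E )
   Parentheses are explicit (redundant ones allowed), so parse trees are in
   bijection with the syntactically valid strings. *)
Inductive rexp (k : nat) : Type :=
  | ESum  : rexp k -> rterm k -> rexp k
  | ETerm : rterm k -> rexp k
with rterm (k : nat) : Type :=
  | TCat  : rterm k -> rfact k -> rterm k
  | TFact : rfact k -> rterm k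
with rfact (k : nat) : Type :=
  | FStar : rfact k -> rfact k
  | FAtom : ratom k -> rfact k
with ratom (k : nat) : Type :=
  | ALet   : 'I_k -> ratom k
  | AEps   : ratom k
  | AEmpty : ratom k
  | AParen : rexp k -> ratom k.

(* Ordinary length: number of symbols of the string, counting parentheses,
   operator symbols '+' and '*', eps and empty (concatenation is juxtaposition,
   hence contributes no symbol). *)
Fixpoint len_e k (e : rexp k) : nat :=
  match e with
  | ESum e t => len_e e + 1 + len_t t
  | ETerm t => len_t t
  end
with len_t k (t : rterm k) : nat :=
  match t with
  | TCat t f => len_t t + len_f f
  | TFact f => len_f f
  end
with len_f k (f : rfact k) : nat :=
  match f with
  | FStar f => len_f f + 1
  | FAtom a => len_a a
  end
with len_a k (a : ratom k) : nat :=
  match a with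
  | ALet _ => 1
  | AEps => 1
  | AEmpty => 1
  | AParen e => len_e e + 2
  end.

Definition word k := seq 'I_k.
Definition language k := set (word k).

Definition lang_cat k (L1 L2 : language k) : language k :=
  fun w => exists u v, [/\ w = u ++ v, L1 u & L2 v].
Definition lang_star k (L : language k) : language k :=
  fun w => exists ws : seq (word k), w = flatten ws /\ (forall u, u \in ws -> L u).

Fixpoint sem_e k (e : rexp k) : language k :=
  match e with
  | ESum e t => fun w => sem_e e w \/ sem_t t w
  | ETerm t => sem_t t
  end
with sem_t k (t : rterm k) : language k :=
  match t with
  | TCat t f => lang_cat (sem_t t) (sem_f f)
  | TFact f => sem_f f
  end
with sem_f k (f : rfact k) : language k :=
  match f with
  | FStar f => lang_star (sem_f f)
  | FAtom a => sem_a a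
  end
with sem_a k (a : ratom k) : language k :=
  match a with
  | ALet x => fun w => w = [:: x]
  | AEps => fun w => w = [::]
  | AEmpty => fun _ => False
  | AParen e => sem_e e
  end.

(* R_k(n): number of distinct languages denoted by regular expressions of
   ordinary length exactly n over a k-letter alphabet. (The set is finite,
   so fset_set is its exact finite-set version.) *)
Definition Rcount (k n : nat) : nat :=
  #|` fset_set [set L : language k | exists e : rexp k, len_e e = n /\ sem_e e = L] |%fset.

From HB Require Import structures.
From mathcomp Require Import all_boot all_order all_algebra finmap.
From mathcomp Require Import boolp classical_sets cardinality.
From mathcomp Require Import zify lra.
Import Order.TTheory GRing.Theory Num.Theory.

Set Implicit Arguments. Unset Strict Implicit. Unset Printing Implicit Defensive.
Local Open Scope classical_set_scope.

(* Both bounds come from explicit families of pairwise distinct languages of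
   terms of length n.  Over {a}, a term t of length n yields t a and (t + eps) a,
   of lengths n + 1 and n + 5; no language of the family contains the empty
   word, so adding eps keeps them apart.  Over {0, 1}, t yields t 0, t 1 and
   t 1 0* (length n + 3), told apart by the last letters of their words.  The
   family sizes satisfy s(n + 5) >= s(n + 4) + s(n), resp.
   s(n + 3) >= 2 s(n + 2) + s(n), and s(n + d + 1) >= a s(n + d) + s(n) forces
   growth like r^n for every r >= 1 with r^(d+1) <= a r^d + 1, i.e. up to the
   real root 1.3247... of x^5 = x^4 + 1, resp. 2.2055... of x^3 = 2 x^2 + 1. *)

Section Counting.
Variable k : nat.

Lemma len_f_gt0 (f : rfact k) : (0 < len_f f)%N.
Proof. by case: f => [f|[x| | |e]] /=; rewrite ?addn1 ?addn2. Qed.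

Lemma len_t_gt0 (t : rterm k) : (0 < len_t t)%N.
Proof.
case: t => [t f|f] /=; last exact: len_f_gt0.
by rewrite (leq_trans (len_f_gt0 f)) // leq_addl.
Qed.

Lemma finite_len_lt n :
  [/\ finite_set [set e : rexp k | (len_e e < n)%N],
      finite_set [set t : rterm k | (len_t t < n)%N],
      finite_set [set f : rfact k | (len_f f < n)%N] &
      finite_set [set a : ratom k | (len_a a < n)%N]].
Proof.
elim: n => [|n [fin_e fin_t fin_f fin_a]].
  by split; apply: (sub_finite_set _ (finite_set0 _)).
have fin_a' : finite_set [set a : ratom k | (len_a a < n.+1)%N].
  apply: (@sub_finite_set _ _ (range (@ALet k) `|` [set AEps k; AEmpty k]
            `|` (@AParen k @` [set e | (len_e e < n)%N]))).
    move=> [x| | |e] /= len_lt; [by left; left; exists x|by left; right; left|..].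
      by left; right; right.
    by right; exists e => //=; lia.
  rewrite !finite_setU; split; [split|exact: finite_image].
    exact/finite_image/finite_finset.
  by split; apply: finite_set1.
have fin_f' : finite_set [set f : rfact k | (len_f f < n.+1)%N].
  apply: (@sub_finite_set _ _ ((@FStar k @` [set f | (len_f f < n)%N])
            `|` (@FAtom k @` [set a | (len_a a < n.+1)%N]))).
    by move=> [f|a] /= len_lt; [left; exists f => //=; lia|right; exists a].
  by rewrite finite_setU; split; apply: finite_image.
have fin_t' : finite_set [set t : rterm k | (len_t t < n.+1)%N].
  apply: (@sub_finite_set _ _
      (((fun p => TCat p.1 p.2) @`
          ([set t | (len_t t < n)%N] `*` [set f | (len_f f < n.+1)%N]))
       `|` (@TFact k @` [set f | (len_f f < n.+1)%N]))).
    move=> [t f|f] /= len_lt; last by right; exists f.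
    by left; exists (t, f) => //; have := len_f_gt0 f; split => /=; lia.
  by rewrite finite_setU; split; apply: finite_image => //; apply: finite_setX.
split => //.
apply: (@sub_finite_set _ _
    (((fun p => ESum p.1 p.2) @`
        ([set e | (len_e e < n)%N] `*` [set t | (len_t t < n.+1)%N]))
     `|` (@ETerm k @` [set t | (len_t t < n.+1)%N]))).
  move=> [e t|t] /= len_lt; last by right; exists t.
  by left; exists (e, t) => //; have := len_t_gt0 t; split => /=; lia.
by rewrite finite_setU; split; apply: finite_image => //; apply: finite_setX.
Qed.

Definition term_lang n (L : language k) :=
  exists t : rterm k, len_t t = n /\ sem_t t = L.

Lemma uniq_size_le_Rcount n (s : seq (language k)) :
  uniq s -> (forall L, L \in s -> term_lang n L) -> (size s <= Rcount k n)%N.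
Proof.
move=> s_uniq s_term; apply: uniq_leq_size => // L Ls.
have [fin_e _ _ _] := finite_len_lt n.+1.
have fin_lang :
    finite_set [set L : language k | exists e : rexp k, len_e e = n /\ sem_e e = L].
  apply: (sub_finite_set _ (finite_image (@sem_e k) fin_e)).
  by move=> M [e [<- <-]]; exists e => /=.
rewrite in_fset_set // inE.
by have [t [<- <-]] := s_term L Ls; exists (ETerm t).
Qed.

End Counting.

Section Languages.
Variable k : nat.
Implicit Types (c d : 'I_k) (L M : language k) (u w : word k).

Definition lang_letter c : language k := [set [:: c]].
Definition lang_rcons c L : language k := lang_cat L (lang_letter c).
Definition lang_opt L : language k := fun w => L w \/ w = [::].
Definition lang_rcons_star c d L : language k :=
  lang_cat (lang_rcons c L) (lang_star (lang_letter d)).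

Lemma term_lang_letter c : term_lang 1 (lang_letter c).
Proof. by exists (TFact (FAtom (ALet c))). Qed.

Lemma term_lang_rcons n c L : term_lang n L -> term_lang n.+1 (lang_rcons c L).
Proof.
case=> t [len_t sem_t]; exists (TCat t (FAtom (ALet c))).
by rewrite /= len_t sem_t addn1.
Qed.

Lemma term_lang_opt n L : term_lang n L -> term_lang n.+4 (lang_opt L).
Proof.
case=> t [len_t sem_t].
exists (TFact (FAtom (AParen (ESum (ETerm t) (TFact (FAtom (AEps k))))))).
by rewrite /= len_t sem_t; split => //; lia.
Qed.

Lemma term_lang_rcons_star n c d L :
  term_lang n L -> term_lang n.+3 (lang_rcons_star c d L).
Proof.
case=> t [len_t sem_t].
exists (TCat (TCat t (FAtom (ALet c))) (FStar (FAtom (ALet d)))).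
by rewrite /= len_t sem_t; split => //; lia.
Qed.

Lemma lang_rconsP c L w : lang_rcons c L w <-> exists2 u, w = rcons u c & L u.
Proof.
split; first by case=> u [v [-> Lu ->]]; exists u; rewrite ?cats1.
by case=> u -> Lu; exists u, [:: c]; rewrite cats1.
Qed.

Lemma lang_rcons_rcons c L u : L u -> lang_rcons c L (rcons u c).
Proof. by move=> Lu; apply/lang_rconsP; exists u. Qed.

Lemma lang_rcons_nil c L : ~ lang_rcons c L [::].
Proof. by case/lang_rconsP => u /(congr1 size); rewrite size_rcons. Qed.

Lemma lang_rcons_inj c : injective (lang_rcons c).
Proof.
suff sub L M : lang_rcons c L = lang_rcons c M -> forall w, L w -> M w.
  by move=> L M eqLM; apply/predeqP => w; split; apply: sub.
move=> eqLM w /(lang_rcons_rcons c); rewrite eqLM.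
by case/lang_rconsP => u /rcons_inj[->].
Qed.

Lemma lang_rcons_neq c d L M u : c != d -> M (rcons u d) -> lang_rcons c L != M.
Proof.
move=> neq_cd Mud; apply/eqP => eqLM; move: Mud; rewrite -eqLM.
case/lang_rconsP => v /(congr1 (last d)); rewrite !last_rcons => eq_dc.
by rewrite eq_dc eqxx in neq_cd.
Qed.

Lemma lang_opt_inj L M : ~ L [::] -> ~ M [::] -> lang_opt L = lang_opt M -> L = M.
Proof.
move=> L_nil M_nil /predeqP eqLM; apply/predeqP => w; split=> [Lw|Mw].
  by have [//|w_nil] := (eqLM w).1 (or_introl Lw); rewrite w_nil in Lw.
by have [//|w_nil] := (eqLM w).2 (or_introl Mw); rewrite w_nil in Mw.
Qed.

Lemma lang_star_letter d w : lang_star (lang_letter d) w -> w = nseq (size w) d.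
Proof.
case=> ws [-> ws_d]; elim: ws ws_d => [//|u ws IH] ws_d.
rewrite (ws_d u (mem_head _ _)) /=; congr (_ :: _).
by apply: IH => v v_ws; apply: ws_d; rewrite inE v_ws orbT.
Qed.

Lemma lang_rcons_star_rcons c d L u : L u -> lang_rcons_star c d L (rcons u c).
Proof.
move=> Lu; exists (rcons u c), [::]; rewrite cats0; split => //.
  exact: lang_rcons_rcons.
by exists [::].
Qed.

Lemma lang_rcons_star_rcons2 c d L u :
  L u -> lang_rcons_star c d L (rcons (rcons u c) d).
Proof.
move=> Lu; exists (rcons u c), [:: d]; rewrite cats1; split => //.
  exact: lang_rcons_rcons.
by exists [:: [:: d]]; split => // v; rewrite inE => /eqP ->.
Qed.

Lemma lang_rcons_star_inj c d : c != d -> injective (lang_rcons_star c d).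
Proof.
move=> neq_cd.
suff sub L M : lang_rcons_star c d L = lang_rcons_star c d M -> forall w, L w -> M w.
  by move=> L M eqLM; apply/predeqP => w; split; apply: sub.
move=> eqLM w /(lang_rcons_star_rcons c d); rewrite eqLM.
case=> x [v [+ /lang_rconsP[u x_eq Mu] /lang_star_letter v_eq]]; rewrite x_eq v_eq.
case: (size v) => [|j]; first by rewrite cats0 => /rcons_inj[->].
have last_nseq y : last y (nseq j.+1 d) = d by elim: j.
move/(congr1 (last c)); rewrite last_cat last_nseq last_rcons => eq_cd.
by rewrite eq_cd eqxx in neq_cd.
Qed.

End Languages.

Lemma uniq_cat_disjoint (T : eqType) (s t : seq T) :
  uniq s -> uniq t -> {in s & t, forall x y, x != y} -> uniq (s ++ t).
Proof.
move=> s_uniq t_uniq neq_st; rewrite cat_uniq s_uniq t_uniq andbT.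
by apply/hasPn => y y_t; apply/negP => y_s; have := neq_st y y y_s y_t; rewrite eqxx.
Qed.

Fixpoint unary_langs n : seq (language 1) :=
  match n with
  | 0 => [::]
  | 1 => [:: lang_letter ord0]
  | (m.+1 as n').+1 => map (lang_rcons ord0)
      (unary_langs n' ++ if m is p.+3 then map (@lang_opt 1) (unary_langs p) else [::])
  end.

(* For n < 3 the truncated n - 3 is 0, and unary_langs 0 is empty. *)
Lemma unary_langsS n : unary_langs n.+2 =
  map (lang_rcons ord0) (unary_langs n.+1 ++ map (@lang_opt 1) (unary_langs (n - 3))).
Proof. by case: n => [|[|[|n]]] //; rewrite !subSS subn0. Qed.

Lemma unary_langs_term n L : L \in unary_langs n -> term_lang n L.
Proof.
elim/ltn_ind: n L => -[|[|n]] IH L //.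
  by rewrite inE => /eqP ->; exact: term_lang_letter.
rewrite unary_langsS => /mapP[M + ->].
rewrite mem_cat => /orP[M_n|/mapP[N N_n3 ->]].
  by apply: term_lang_rcons; apply: IH.
case: n IH N_n3 => [|[|[|n]]] IH // N_n.
apply/term_lang_rcons/term_lang_opt; rewrite !subSS subn0 in N_n.
by apply: (IH n _ _ N_n); lia.
Qed.

Lemma unary_langs_nil n L : L \in unary_langs n -> ~ L [::].
Proof.
case: n => [|[|n]] //; first by rewrite inE => /eqP ->.
by rewrite unary_langsS => /mapP[M _ ->]; apply: lang_rcons_nil.
Qed.

Lemma uniq_unary_langs n : uniq (unary_langs n).
Proof.
elim/ltn_ind: n => -[|[|n]] IH //.
rewrite unary_langsS map_inj_uniq; last exact: lang_rcons_inj.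
apply: uniq_cat_disjoint; first exact: IH.
  rewrite map_inj_in_uniq; first by apply: IH; lia.
  by move=> L M /unary_langs_nil L_nil /unary_langs_nil M_nil; apply: lang_opt_inj.
move=> L _ /unary_langs_nil L_nil /mapP[M _ ->]; apply/eqP => L_opt.
by apply: L_nil; rewrite L_opt; right.
Qed.

Lemma size_unary_langs_gt0 n : (0 < n)%N -> (0 < size (unary_langs n))%N.
Proof.
by elim: n => [|[|n] IH] // _; rewrite unary_langsS size_map size_cat ltn_addr ?IH.
Qed.

Lemma size_unary_langsS n : size (unary_langs n.+2) =
  (size (unary_langs n.+1) + size (unary_langs (n - 3)))%N.
Proof. by rewrite unary_langsS size_map size_cat size_map. Qed.

Fixpoint binary_langs n : seq (language 2) :=
  match n with
  | 0 => [::]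
  | 1 => [:: lang_letter ord0]
  | (m.+1 as n').+1 =>
      map (lang_rcons ord0) (binary_langs n') ++
      map (lang_rcons ord_max) (binary_langs n') ++
      if m is p.+1 then map (lang_rcons_star ord_max ord0) (binary_langs p) else [::]
  end.

Lemma binary_langsS n : binary_langs n.+2 =
  map (lang_rcons ord0) (binary_langs n.+1) ++
  map (lang_rcons ord_max) (binary_langs n.+1) ++
  map (lang_rcons_star ord_max ord0) (binary_langs n.-1).
Proof. by case: n. Qed.

Lemma binary_langs_term n L : L \in binary_langs n -> term_lang n L.
Proof.
elim/ltn_ind: n L => -[|[|n]] IH L //.
  by rewrite inE => /eqP ->; exact: term_lang_letter.
rewrite binary_langsS !mem_cat => /or3P[] /mapP[M M_n ->].
- by apply: term_lang_rcons; apply: IH.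
- by apply: term_lang_rcons; apply: IH.
case: n IH M_n => [|n] IH // M_n.
by apply: term_lang_rcons_star; apply: (IH n _ M M_n); lia.
Qed.

Lemma binary_langs_nonempty n L : L \in binary_langs n -> exists w, L w.
Proof.
elim/ltn_ind: n L => -[|[|n]] IH L //.
  by rewrite inE => /eqP ->; exists [:: ord0].
rewrite binary_langsS !mem_cat => /or3P[] /mapP[M M_m ->].
- have [|w Mw] := IH _ _ M M_m; first by [].
  by exists (rcons w ord0); apply: lang_rcons_rcons.
- have [|w Mw] := IH _ _ M M_m; first by [].
  by exists (rcons w ord_max); apply: lang_rcons_rcons.
- have [|w Mw] := IH _ _ M M_m; first lia.
  by exists (rcons w ord_max); apply: lang_rcons_star_rcons.
Qed.

Lemma uniq_binary_langs n : uniq (binary_langs n).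
Proof.
elim/ltn_ind: n => -[|[|n]] IH //.
have uniq_rcons c : uniq (map (lang_rcons c) (binary_langs n.+1)).
  by rewrite map_inj_uniq ?IH //; apply: lang_rcons_inj.
rewrite binary_langsS; apply: uniq_cat_disjoint => //.
  apply: uniq_cat_disjoint => //.
    by rewrite map_inj_uniq; [apply: IH; lia | apply: lang_rcons_star_inj].
  move=> _ _ /mapP[L _ ->] /mapP[M /binary_langs_nonempty[w Mw] ->].
  by apply: (lang_rcons_neq _ _ (lang_rcons_star_rcons2 ord_max ord0 Mw)).
move=> _ M /mapP[L _ ->].
rewrite mem_cat => /orP[] /mapP[N /binary_langs_nonempty[w Nw] ->].
  by apply: (lang_rcons_neq _ _ (lang_rcons_rcons ord_max Nw)).
by apply: (lang_rcons_neq _ _ (lang_rcons_star_rcons ord_max ord0 Nw)).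
Qed.

Lemma size_binary_langs_gt0 n : (0 < n)%N -> (0 < size (binary_langs n))%N.
Proof.
by elim: n => [|[|n] IH] // _; rewrite binary_langsS size_cat size_map ltn_addr ?IH.
Qed.

Lemma size_binary_langsS n : size (binary_langs n.+2) =
  (2 * size (binary_langs n.+1) + size (binary_langs n.-1))%N.
Proof. by rewrite binary_langsS !size_cat !size_map addnA addnn mul2n. Qed.

Local Open Scope ring_scope.

Definition is_Omega_pow (R : numDomainType) (r : R) (s : nat -> nat) :=
  exists c : R, 0 < c /\ exists N : nat, forall n : nat, (N <= n)%N ->
    c * r ^+ n <= (s n)%:R.

Lemma is_Omega_pow_le (R : numDomainType) (r : R) (s t : nat -> nat) :
  (forall n, s n <= t n)%N -> is_Omega_pow r s -> is_Omega_pow r t.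
Proof.
move=> le_st [c [c_gt0 [N bound]]]; exists c; split => //; exists N => n N_n.
by rewrite (le_trans (bound n N_n)) // ler_nat.
Qed.

Lemma linear_recurrence_Omega_pow (R : realFieldType) (r : R) (a d n0 : nat)
    (s : nat -> nat) :
  1 <= r -> r ^+ d.+1 <= a%:R * r ^+ d + 1 ->
  (forall n, (n0 <= n < n0 + d.+1)%N -> (0 < s n)%N) ->
  (forall n, (n0 <= n)%N -> (a * s (n + d) + s n <= s (n + d.+1))%N) ->
  is_Omega_pow r s.
Proof.
move=> r_ge1 r_char s_base s_rec.
have r_ge0 : 0 <= r := le_trans ler01 r_ge1.
pose C := r ^+ (n0 + d.+1).
have C_gt0 : 0 < C by rewrite exprn_gt0 // (lt_le_trans ltr01 r_ge1).
have bound n : (n0 <= n)%N -> r ^+ n <= C * (s n)%:R.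
  elim/ltn_ind: n => n IH n0_n.
  have [n_small|n_large] := ltnP n (n0 + d.+1).
    have s_ge1 : 1 <= (s n)%:R :> R by rewrite ler1n s_base ?n0_n.
    apply: (le_trans (ler_weXn2l r_ge1 (ltnW n_small))).
    by rewrite -[X in X <= _]mulr1 ler_pM2l.
  have [m n_eq] : exists m, n = (m + d.+1)%N by exists (n - d.+1)%N; lia.
  have IH_d : r ^+ (m + d) <= C * (s (m + d))%:R by apply: IH; lia.
  have IH_0 : r ^+ m <= C * (s m)%:R by apply: IH; lia.
  have s_m_rec : (a * s (m + d) + s m)%:R <= (s n)%:R :> R.
    by rewrite ler_nat n_eq; apply: s_rec; lia.
  apply: le_trans (ler_wpM2l (ltW C_gt0) s_m_rec).
  rewrite n_eq exprD natrD natrM mulrDr mulrCA.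
  apply: (le_trans (ler_wpM2l (exprn_ge0 m r_ge0) r_char)).
  rewrite mulrDr mulr1 [r ^+ m * _]mulrCA -exprD.
  by apply: lerD => //; apply: ler_wpM2l.
exists C^-1; split; first by rewrite invr_gt0.
by exists n0 => n n0_n; rewrite mulrC ler_pdivrMr // mulrC bound.
Qed.

Lemma size_unary_langs_le_Rcount n : (size (unary_langs n) <= Rcount 1 n)%N.
Proof.
by apply: uniq_size_le_Rcount; [exact: uniq_unary_langs | exact: unary_langs_term].
Qed.

Lemma size_binary_langs_le_Rcount n : (size (binary_langs n) <= Rcount 2 n)%N.
Proof.
by apply: uniq_size_le_Rcount; [exact: uniq_binary_langs | exact: binary_langs_term].
Qed.

Theorem mainTheorem1 :
  (exists c : rat, 0 < c /\ exists N : nat, forall n : nat, (N <= n)%N ->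
      c * (13247%:R / 10000%:R) ^+ n <= (Rcount 1 n)%:R) /\
  (exists c : rat, 0 < c /\ exists N : nat, forall n : nat, (N <= n)%N ->
      c * (2102374%:R / 1000000%:R) ^+ n <= (Rcount 2 n)%:R).
Proof.
split.
  apply: (is_Omega_pow_le size_unary_langs_le_Rcount).
  apply: (@linear_recurrence_Omega_pow _ _ 1 4 1); [lra | lra | | ].
    by move=> n /andP[n_gt0 _]; apply: size_unary_langs_gt0.
  by move=> [|n] // _; rewrite !addnS addn0 (size_unary_langsS n.+4) !subSS subn0 mul1n.
apply: (is_Omega_pow_le size_binary_langs_le_Rcount).
apply: (@linear_recurrence_Omega_pow _ _ 2 2 1); [lra | lra | | ].
  by move=> n /andP[n_gt0 _]; apply: size_binary_langs_gt0.
by move=> [|n] // _; rewrite !addnS addn0 (size_binary_langsS n.+2).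
Qed.
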